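(* Let $R,S\in GL(2,\mathbb{C})$ be diagonalizable matrices with eigenvalues $r_1,r_2\in S^1$ and $s_1,s_2\in S^1$ respectively, such that $r_1\ne r_2$, $s_1\ne s_2$ and $\{r_1,r_2\}\cap\{s_1,s_2\}=\emptyset$. Suppose that $1$ is an eigenvalue of $RS^{-1}$. Then the eigenspaces $E_{r_1},E_{r_2},E_{s_1},E_{s_2}$, regarded as points of $\mathbb{CP}^1$, are pairwise distinct and lie on a circle in $\mathbb{CP}^1$.
   Context: Here $S^1$ is the unit circle in $\mathbb{C}$, $E_{r}$ denotes the eigenspace (a complex line in $\mathbb{C}^2$, i.e. a point of $\mathbb{CP}^1$) for the eigenvalue $r$, and a circle in $\mathbb{CP}^1$ means the image of the real projective line $\mathbb{RP}^1\subset\mathbb{CP}^1$ under a Möbius transformation (a round circle or a line together with $\infty$ in an affine chart). *)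

From HB Require Import structures.
From mathcomp Require Import all_boot all_order all_algebra.
From mathcomp Require Import complex.
From mathcomp Require Import reals.
Set Implicit Arguments. Unset Strict Implicit. Unset Printing Implicit Defensive.
Import Order.TTheory GRing.Theory Num.Theory.
Local Open Scope ring_scope.

(* Points of CP^1 are complex lines of C^2.  Subspaces of C^2 are represented,
   as in mxalgebra, by row spaces of matrices; a column vector v is encoded
   by its transpose v^T (a row vector). *)

(* Column eigenspace E_a(A) = { v | A v = a v }, encoded by transposes:
   v^T *m A^T = a v^T, i.e. the (row) eigenspace of A^T. *)
Definition ceigenspace (R : realType) n (A : 'M[R[i]]_n) (a : R[i]) :=
  eigenspace A^T a.

Definition realvec (R : realType) (w : 'rV[R]_2) : 'rV[R[i]]_2 :=
  map_mx (fun x => x%:C%C) w.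

(* E lies on the image of RP^1 under the Mobius transformation M (M in GL(2,C)):
   E contains (hence, for a line, equals) M v for a nonzero real vector v.
   In transposed form: (M v)^T = v^T M^T. *)
Definition on_mobius_image_of_RP1 (R : realType) (M : 'M[R[i]]_2)
  (E : 'M[R[i]]_2) : Prop :=
  exists w : 'rV[R]_2, w != 0 /\ (realvec w *m M^T <= E)%MS.

Definition on_circle (R : realType) (Es : seq 'M[R[i]]_2) : Prop :=
  exists M : 'M[R[i]]_2, M \in unitmx /\
    forall E, E \in Es -> on_mobius_image_of_RP1 M E.

From HB Require Import structures.
From mathcomp Require Import all_boot all_order all_algebra.
From mathcomp Require Import complex.
From mathcomp Require Import reals.
From mathcomp Require Import ring.
Set Implicit Arguments.
Unset Strict Implicit.
Unset Printing Implicit Defensive.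
Import Order.TTheory GRing.Theory Num.Theory.
Local Open Scope ring_scope.

(* Let p1, p2 be eigenvectors of
   A^T for r1, r2, let q1, q2 be eigenvectors of B^T for s1, s2, and let t <> 0
   satisfy t A^T = t B^T (such t exists because 1 is an eigenvalue of A B^-1).
   Write q_i = x_i p1 + y_i p2 and t = a q1 + b q2.  Reading t A^T = t B^T in
   the basis (p1, p2) gives
     a x1 (r1 - s1) = b x2 (s2 - r1)  and  a y1 (r2 - s1) = b y2 (s2 - r2).
   Since t is an eigenvector of neither matrix, a, b and all x_i, y_i are
   nonzero: no q_i is an eigenvector of A^T, which gives distinctness, and
   dividing the two relations shows that (y2 x1) / (y1 x2) is a cross ratio of
   the four unimodular eigenvalues, hence real.  A Mobius map built from p1
   and a multiple of p2 then sends 0, oo, 1 and this real number to the four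
   eigenlines. *)

Lemma eigenvalue_trmx (F : fieldType) n (A : 'M[F]_n) a : eigenvalue A^T a = eigenvalue A a.
Proof.
have char_poly_trmx : char_poly A^T = char_poly A.
  rewrite /char_poly -det_tr; congr (\det _); apply/matrixP => i j.
  by rewrite !mxE eq_sym.
by rewrite !eigenvalue_root_char char_poly_trmx.
Qed.

Lemma eigenvalue1_invmx_mulmx (F : fieldType) n (A B : 'M[F]_n) :
  B \in unitmx -> eigenvalue (invmx B *m A) 1 -> exists2 t : 'rV_n, t *m A = t *m B & t != 0.
Proof.
move=> B_unit /eigenvalueP[u uBA u_neq0]; exists (u *m invmx B).
  by rewrite -mulmxA uBA scale1r mulmxKV.
by apply: contra_neq u_neq0 => uB0; rewrite -(mulmxKV B_unit u) uB0 mul0mx.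
Qed.

Lemma eigenvector_eigenvalue_uniq (F : fieldType) n (A : 'M[F]_n) (v : 'rV[F]_n) a b :
  v != 0 -> v *m A = a *: v -> v *m A = b *: v -> a = b.
Proof.
move=> v_neq0 vA_a vA_b; apply/eqP; rewrite -subr_eq0.
have : (a - b) *: v = 0 by rewrite scalerBl -vA_a -vA_b subrr.
by move/eqP; rewrite scalemx_eq0 (negbTE v_neq0) orbF.
Qed.

Lemma eqmx_seq_distinct (F : fieldType) m n (Es : seq 'M[F]_(m, n)) (ws : seq 'rV[F]_n) :
  (forall j, (j < size Es)%N -> (ws`_j <= Es`_j)%MS) ->
  (forall i j, (i < j < size Es)%N -> ~~ (ws`_j <= Es`_i)%MS) ->
  forall i j, (i < size Es)%N -> (j < size Es)%N -> i != j -> ~~ (Es`_i == Es`_j)%MS.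
Proof.
move=> wsE wsNE i j i_lt j_lt; case: ltngtP => // [lt_ij | lt_ji] _.
  apply: contra (wsNE i j _) => [/andP[_ EjEi] | ]; last by rewrite lt_ij.
  exact: submx_trans (wsE j j_lt) EjEi.
apply: contra (wsNE j i _) => [/andP[EiEj _] | ]; last by rewrite lt_ji.
exact: submx_trans (wsE i i_lt) EiEj.
Qed.

Section Row2.
Variable R : pzRingType.

Definition row2 (a b : R) : 'rV[R]_2 := row_mx a%:M b%:M.

Lemma row2_entries a b : row2 a b 0 0 = a /\ row2 a b 0 1 = b.
Proof.
by rewrite /row2 !mxE; split; case: splitP => j //=; rewrite ord1 ?mxE.
Qed.

Lemma row2E (c : 'rV[R]_2) : c = row2 (c 0 0) (c 0 1).
Proof.
apply/rowP => j; rewrite /row2 mxE.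
by case: splitP => k jk; rewrite ord1 in jk *; rewrite mxE eqxx; congr (c 0 _); apply/val_inj.
Qed.

Lemma row2_eq0 a b : (row2 a b == 0) = (a == 0) && (b == 0).
Proof.
apply/eqP/andP => [ab0 | [/eqP-> /eqP->]]; last by rewrite /row2 raddf0 row_mx0.
by have [] := row2_entries a b; rewrite ab0 !mxE => <- <-.
Qed.

Lemma mul_row2_col_mx n a b (u v : 'rV[R]_n) : row2 a b *m col_mx u v = a *: u + b *: v.
Proof. by rewrite /row2 (@mul_row_col _ 1 1 1) !mul_scalar_mx. Qed.

End Row2.

Section Basis2.
Variable F : fieldType.

Lemma col_mx2_unitmxP (u v : 'rV[F]_2) :
  reflect (forall a b, a *: u + b *: v = 0 -> a = 0 /\ b = 0) (col_mx u v \in unitmx).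
Proof.
apply: (iffP idP) => [uv_unit a b | uv_free].
  rewrite -mul_row2_col_mx => /(canRL (mulmxK uv_unit)); rewrite mul0mx => /eqP.
  by rewrite row2_eq0 => /andP[/eqP-> /eqP->].
rewrite -row_free_unit -kermx_eq0; apply/rowV0P => c /sub_kermxP.
rewrite [c]row2E mul_row2_col_mx => /uv_free[-> ->].
by apply/eqP; rewrite row2_eq0 eqxx.
Qed.

Lemma col_mx2_span (u v : 'rV[F]_2) :
  col_mx u v \in unitmx -> forall w, exists a b, w = a *: u + b *: v.
Proof.
move=> uv_unit w; set c := w *m invmx (col_mx u v).
by exists (c 0 0), (c 0 1); rewrite -mul_row2_col_mx -row2E mulmxKV.
Qed.

Lemma col_mx2_coords_inj (u v : 'rV[F]_2) a b a' b' : col_mx u v \in unitmx ->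
  a *: u + b *: v = a' *: u + b' *: v -> a = a' /\ b = b'.
Proof.
move=> uv_unit; rewrite -!mul_row2_col_mx => /(can_inj (mulmxK uv_unit)) e.
have [[a0 b0] [a0' b0']] := (row2_entries a b, row2_entries a' b').
by split; [rewrite -a0 e a0' | rewrite -b0 e b0'].
Qed.

End Basis2.

Section EigenBasis.
Variables (F : fieldType) (A : 'M[F]_2) (p1 p2 : 'rV[F]_2) (r1 r2 : F).
Hypotheses (p1A : p1 *m A = r1 *: p1) (p2A : p2 *m A = r2 *: p2).
Hypotheses (p1_neq0 : p1 != 0) (p2_neq0 : p2 != 0) (r12 : r1 != r2).

Lemma eigenbasis_mulmx x y :
  (x *: p1 + y *: p2) *m A = (x * r1) *: p1 + (y * r2) *: p2.
Proof. by rewrite mulmxDl -!scalemxAl p1A p2A !scalerA. Qed.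

Lemma eigenbasis_unitmx : col_mx p1 p2 \in unitmx.
Proof.
apply/col_mx2_unitmxP => a b ab0.
have : (b * (r2 - r1)) *: p2 = (a *: p1 + b *: p2) *m A - r1 *: (a *: p1 + b *: p2).
  by rewrite eigenbasis_mulmx; apply/rowP => j; rewrite !mxE; ring.
rewrite ab0 mul0mx scaler0 subr0 => /eqP.
rewrite scalemx_eq0 (negbTE p2_neq0) orbF mulf_eq0 subr_eq0 [r2 == r1]eq_sym.
rewrite (negbTE r12) orbF.
move/eqP=> b0; move: ab0; rewrite b0 scale0r addr0 => /eqP.
by rewrite scalemx_eq0 (negbTE p1_neq0) orbF => /eqP.
Qed.

Lemma eigenbasis_eigenvector x y s :
  (x *: p1 + y *: p2) *m A = s *: (x *: p1 + y *: p2) ->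
  (x != 0 -> s = r1) /\ (y != 0 -> s = r2).
Proof.
rewrite eigenbasis_mulmx scalerDr !scalerA => /col_mx2_coords_inj.
case/(_ eigenbasis_unitmx) => exE eyE.
have coord_eq z u : z * u = s * z -> z != 0 -> s = u.
  by move=> e z_neq0; apply: (mulIf z_neq0); rewrite -e mulrC.
by split; apply: coord_eq.
Qed.

Lemma eigenbasis_no_other_eigenvalue (w : 'rV[F]_2) s :
  w *m A = s *: w -> s != r1 -> s != r2 -> w = 0.
Proof.
have [x [y ->]] := col_mx2_span eigenbasis_unitmx w.
move=> /eigenbasis_eigenvector[sr1 sr2] /eqP s_neq_r1 /eqP s_neq_r2.
have [x0 | /sr1 //] := eqVneq x 0; have [y0 | /sr2 //] := eqVneq y 0.
by rewrite x0 y0 !scale0r addr0.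
Qed.

Lemma eigenbasis_not_eigenvector x y s : x != 0 -> y != 0 ->
  (x *: p1 + y *: p2) *m A != s *: (x *: p1 + y *: p2).
Proof.
move=> x_neq0 y_neq0.
apply/eqP => /eigenbasis_eigenvector[/(_ x_neq0) sr1 /(_ y_neq0) sr2].
by move: r12; rewrite -sr1 -sr2 eqxx.
Qed.

End EigenBasis.

Definition cross_ratio (F : fieldType) (z1 z2 z3 z4 : F) :=
  (z3 - z1) * (z4 - z2) / ((z3 - z2) * (z4 - z1)).

Lemma cross_ratio_real (C : numClosedFieldType) (z1 z2 z3 z4 : C) :
  `|z1| = 1 -> `|z2| = 1 -> `|z3| = 1 -> `|z4| = 1 -> cross_ratio z1 z2 z3 z4 \is Num.real.
Proof.
move=> z1_unit z2_unit z3_unit z4_unit; apply/CrealP.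
have conjE (z : C) : `|z| = 1 -> z^* = z^-1.
  by move=> z_unit; rewrite invC_norm z_unit expr1n invr1 mul1r.
have neq0 (z : C) : `|z| = 1 -> z != 0.
  by move=> z_unit; rewrite -normr_gt0 z_unit ltr01.
(* When the denominator vanishes the cross ratio is the junk value [x / 0 = 0]. *)
rewrite /cross_ratio; have [->|] := eqVneq ((z3 - z2) * (z4 - z1)) 0.
  by rewrite invr0 mulr0 conjC0.
rewrite mulf_eq0 negb_or !subr_eq0 => /andP[z32 z41].
rewrite !(rmorphM, rmorphB, fmorphV) /= !conjE //; field.
by rewrite !mulN1r !subr_eq0 z32 z41 [z1 == z4]eq_sym [z2 == z3]eq_sym z32 z41 !neq0.
Qed.

Section TwoEigenbases.
Variables (F : fieldType) (A B : 'M[F]_2) (p1 p2 q1 q2 t : 'rV[F]_2) (r1 r2 s1 s2 : F).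
Hypotheses (p1A : p1 *m A = r1 *: p1) (p2A : p2 *m A = r2 *: p2).
Hypotheses (p1_neq0 : p1 != 0) (p2_neq0 : p2 != 0) (r12 : r1 != r2).
Hypotheses (q1B : q1 *m B = s1 *: q1) (q2B : q2 *m B = s2 *: q2).
Hypotheses (q1_neq0 : q1 != 0) (q2_neq0 : q2 != 0) (s12 : s1 != s2).
Hypotheses (rs11 : r1 != s1) (rs12 : r1 != s2) (rs21 : r2 != s1) (rs22 : r2 != s2).
Hypotheses (tAB : t *m A = t *m B) (t_neq0 : t != 0).

Let p_unit := eigenbasis_unitmx p1A p2A p1_neq0 p2_neq0 r12.
Let q_unit := eigenbasis_unitmx q1B q2B q1_neq0 q2_neq0 s12.

Lemma t_not_eigenvector_A r : r != s1 -> r != s2 -> t *m A != r *: t.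
Proof.
move=> rs1 rs2; apply/eqP; rewrite tAB => tB.
have := eigenbasis_no_other_eigenvalue q1B q2B q1_neq0 q2_neq0 s12 tB rs1 rs2.
by apply/eqP.
Qed.

Lemma t_not_eigenvector_B s : r1 != s -> r2 != s -> t *m B != s *: t.
Proof.
rewrite eq_sym => sr1; rewrite eq_sym => sr2; apply/eqP; rewrite -tAB => tA.
have := eigenbasis_no_other_eigenvalue p1A p2A p1_neq0 p2_neq0 r12 tA sr1 sr2.
by apply/eqP.
Qed.

Section Coordinates.
Variables (x1 y1 x2 y2 a b : F).
Hypotheses (q1E : q1 = x1 *: p1 + y1 *: p2) (q2E : q2 = x2 *: p1 + y2 *: p2).
Hypothesis (tE : t = a *: q1 + b *: q2).

Lemma t_coords : t = (a * x1 + b * x2) *: p1 + (a * y1 + b * y2) *: p2.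
Proof. by rewrite tE q1E q2E; apply/rowP => j; rewrite !mxE; ring. Qed.

Lemma coords_relation :
  a * x1 * (r1 - s1) = b * x2 * (s2 - r1) /\ a * y1 * (r2 - s1) = b * y2 * (s2 - r2).
Proof.
have tBE : t *m B = (a * s1 * x1 + b * s2 * x2) *: p1 + (a * s1 * y1 + b * s2 * y2) *: p2.
  by rewrite tE mulmxDl -!scalemxAl q1B q2B q1E q2E; apply/rowP => j; rewrite !mxE; ring.
move: tAB; rewrite t_coords (eigenbasis_mulmx p1A p2A) -t_coords tBE.
case/(col_mx2_coords_inj p_unit) => e1 e2.
split; apply/eqP; rewrite -subr_eq0.
  by rewrite -(subrr (a * s1 * x1 + b * s2 * x2)) -{1}e1; apply/eqP; ring.
by rewrite -(subrr (a * s1 * y1 + b * s2 * y2)) -{1}e2; apply/eqP; ring.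
Qed.

Lemma t_coords_neq0 : a != 0 /\ b != 0.
Proof.
split; apply/eqP => ab0.
  apply: (negP (t_not_eigenvector_B rs12 rs22)); apply/eqP.
  by rewrite tE ab0 scale0r add0r -scalemxAl q2B !scalerA mulrC.
apply: (negP (t_not_eigenvector_B rs11 rs21)); apply/eqP.
by rewrite tE ab0 scale0r addr0 -scalemxAl q1B !scalerA mulrC.
Qed.

Lemma q_coords_neq0 : [/\ x1 != 0, y1 != 0, x2 != 0 & y2 != 0].
Proof.
have [e1 e2] := coords_relation; have [a_neq0 b_neq0] := t_coords_neq0.
have x1x2 : (x1 == 0) = (x2 == 0).
  move/(congr1 (eq_op^~ 0)): e1; rewrite !mulf_eq0 !subr_eq0.
  rewrite (negbTE a_neq0) (negbTE b_neq0) (negbTE rs11) [s2 == r1]eq_sym.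
  by rewrite (negbTE rs12) /= !orbF.
have y1y2 : (y1 == 0) = (y2 == 0).
  move/(congr1 (eq_op^~ 0)): e2; rewrite !mulf_eq0 !subr_eq0.
  rewrite (negbTE a_neq0) (negbTE b_neq0) (negbTE rs21) [s2 == r2]eq_sym.
  by rewrite (negbTE rs22) /= !orbF.
have x1_neq0 : x1 != 0.
  apply/eqP => x10; have x20 : x2 = 0 by apply/eqP; rewrite -x1x2 x10.
  apply: (negP (t_not_eigenvector_A rs21 rs22)); apply/eqP.
  rewrite t_coords (eigenbasis_mulmx p1A p2A) x10 x20.
  by apply/rowP => j; rewrite !mxE; ring.
have y1_neq0 : y1 != 0.
  apply/eqP => y10; have y20 : y2 = 0 by apply/eqP; rewrite -y1y2 y10.
  apply: (negP (t_not_eigenvector_A rs11 rs12)); apply/eqP.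
  rewrite t_coords (eigenbasis_mulmx p1A p2A) y10 y20.
  by apply/rowP => j; rewrite !mxE; ring.
by split; rewrite // -?x1x2 -?y1y2.
Qed.

Lemma q_coords_cross_ratio : y2 * x1 / (y1 * x2) = cross_ratio r1 r2 s2 s1.
Proof.
have [e1 e2] := coords_relation; have [a_neq0 b_neq0] := t_coords_neq0.
have [x1_neq0 y1_neq0 x2_neq0 _] := q_coords_neq0.
have ds11 : r1 - s1 != 0 by rewrite subr_eq0.
have ds22 : s2 - r2 != 0 by rewrite subr_eq0 eq_sym.
have -> : x1 = b * x2 * (s2 - r1) / (a * (r1 - s1)).
  by rewrite -e1; field; rewrite a_neq0 ds11.
have -> : y2 = a * y1 * (r2 - s1) / (b * (s2 - r2)).
  by rewrite e2; field; rewrite b_neq0 ds22.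
rewrite /cross_ratio; field.
by rewrite a_neq0 b_neq0 x2_neq0 y1_neq0 ds11 ds22 subr_eq0 eq_sym rs11.
Qed.

End Coordinates.

Lemma two_eigenbases_config :
  let Es := [:: eigenspace A r1; eigenspace A r2; eigenspace B s1; eigenspace B s2] in
  (forall i j : 'I_4, i != j -> ~~ (Es`_i == Es`_j)%MS) /\
  exists x1 y1 x2 y2, [/\ q1 = x1 *: p1 + y1 *: p2, q2 = x2 *: p1 + y2 *: p2,
    [/\ x1 != 0, y1 != 0 & x2 != 0] & y2 * x1 / (y1 * x2) = cross_ratio r1 r2 s2 s1].
Proof.
have [x1 [y1 q1E]] := col_mx2_span p_unit q1.
have [x2 [y2 q2E]] := col_mx2_span p_unit q2.
have [a [b tE]] := col_mx2_span q_unit t.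
have [x1_neq0 y1_neq0 x2_neq0 y2_neq0] := q_coords_neq0 q1E q2E tE.
split; last by exists x1, y1, x2, y2; split; rewrite ?(q_coords_cross_ratio q1E q2E tE).
move=> i j ij; apply: (eqmx_seq_distinct (ws := [:: p1; p2; q1; q2])) => //.
  by case=> [|[|[|[|//]]]] _; apply/eigenspaceP.
have not_eigen x y s :
    x != 0 -> y != 0 -> ~~ ((x *: p1 + y *: p2)%R <= eigenspace A s)%MS.
  move=> x_neq0 y_neq0; apply: contra _
    (eigenbasis_not_eigenvector p1A p2A p1_neq0 p2_neq0 r12 s x_neq0 y_neq0).
  by move/eigenspaceP/eqP.
move=> [|[|[|i']]] [|[|[|[|j']]]] //=; rewrite ?andbF // => _.
- apply/eigenspaceP => /(eigenvector_eigenvalue_uniq p2_neq0 p2A) r21.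
  by move: r12; rewrite r21 eqxx.
1-4: by rewrite ?q1E ?q2E; apply: not_eigen.
apply/eigenspaceP => /(eigenvector_eigenvalue_uniq q2_neq0 q2B) s21.
by move: s12; rewrite s21 eqxx.
Qed.

End TwoEigenbases.

Lemma realvec_row2 (R : realType) (x y : R) : realvec (row2 x y) = row2 x%:C%C y%:C%C.
Proof.
by apply/rowP => j; rewrite !mxE; case: splitP => k _; rewrite !mxE ord1 eqxx !mulr1n.
Qed.

Lemma on_mobius_image_col_mx (R : realType) (u v : 'rV[R[i]]_2) (E : 'M[R[i]]_2) (x y : R) :
  (x != 0) || (y != 0) -> ((x%:C%C *: u + y%:C%C *: v)%R <= E)%MS ->
  on_mobius_image_of_RP1 (col_mx u v)^T E.
Proof.
move=> xy_neq0 uvE; exists (row2 x y); split; first by rewrite row2_eq0 negb_and.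
by rewrite trmxK realvec_row2 mul_row2_col_mx.
Qed.

Lemma on_circle_of_real_cross_ratio (R : realType) (E1 E2 E3 E4 : 'M[R[i]]_2)
    (p1 p2 : 'rV[R[i]]_2) (x1 y1 x2 y2 : R[i]) (k : R) :
  col_mx p1 p2 \in unitmx -> x1 != 0 -> y1 != 0 -> x2 != 0 ->
  y2 * x1 / (y1 * x2) = k%:C%C ->
  (p1 <= E1)%MS -> (p2 <= E2)%MS ->
  ((x1 *: p1 + y1 *: p2)%R <= E3)%MS -> ((x2 *: p1 + y2 *: p2)%R <= E4)%MS ->
  on_circle [:: E1; E2; E3; E4].
Proof.
(* With mu = y1 / x1, the real points (1:0), (0:1), (1:1) and (1:k) are sent to
   p1, mu p2, q1 / x1 and q2 / x2 respectively. *)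
move=> p_unit x1_neq0 y1_neq0 x2_neq0 kE pE1 pE2 qE3 qE4.
set mu := y1 / x1; have mu_neq0 : mu != 0 by rewrite mulf_neq0 ?invr_eq0.
exists (col_mx p1 (mu *: p2))^T; split.
  rewrite unitmx_tr; apply/col_mx2_unitmxP => a b.
  rewrite scalerA => /(col_mx2_unitmxP _ _ p_unit)[-> /eqP].
  by rewrite mulf_eq0 (negbTE mu_neq0) orbF => /eqP.
move=> E; rewrite !inE => /or4P[]/eqP->.
- apply: (@on_mobius_image_col_mx _ _ _ _ 1 0); first by rewrite oner_eq0.
  by rewrite rmorph1 rmorph0 scale1r scale0r addr0.
- apply: (@on_mobius_image_col_mx _ _ _ _ 0 1); first by rewrite oner_eq0 orbT.
  by rewrite rmorph1 rmorph0 scale1r scale0r add0r scalemx_sub.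
- apply: (@on_mobius_image_col_mx _ _ _ _ 1 1); first by rewrite oner_eq0.
  rewrite rmorph1 !scale1r (_ : _ + _ = x1^-1 *: (x1 *: p1 + y1 *: p2)) ?scalemx_sub //.
  by rewrite scalerDr !scalerA mulVf // scale1r mulrC.
- apply: (@on_mobius_image_col_mx _ _ _ _ 1 k); first by rewrite oner_eq0.
  rewrite rmorph1 scale1r -kE (_ : _ + _ = x2^-1 *: (x2 *: p1 + y2 *: p2)) ?scalemx_sub //.
  rewrite scalerDr !scalerA mulVf // scale1r; congr (_ + _ *: _); rewrite /mu; field.
  by rewrite x1_neq0 y1_neq0 x2_neq0.
Qed.

Theorem lemma22 (R : realType) (A B : 'M[R[i]]_2) (r1 r2 s1 s2 : R[i]) :
  A \in unitmx -> B \in unitmx ->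
  diagonalizable A -> diagonalizable B ->
  eigenvalue A r1 -> eigenvalue A r2 -> eigenvalue B s1 -> eigenvalue B s2 ->
  `|r1| = 1 -> `|r2| = 1 -> `|s1| = 1 -> `|s2| = 1 ->
  r1 != r2 -> s1 != s2 ->
  r1 != s1 -> r1 != s2 -> r2 != s1 -> r2 != s2 ->
  eigenvalue (A *m invmx B) 1 ->
  let E := [:: ceigenspace A r1; ceigenspace A r2;
               ceigenspace B s1; ceigenspace B s2] in
  (forall i j : 'I_4, i != j -> ~~ (E`_i == E`_j)%MS) /\ on_circle E.
Proof.
(* Invertibility of A and diagonalizability are implied by the other hypotheses. *)
move=> _ B_unit _ _ eA1 eA2 eB1 eB2 r1_unit r2_unit s1_unit s2_unit r12 s12.
move=> rs11 rs12 rs21 rs22 eAB E.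
have /eigenvalueP[p1 p1A p1_neq0] : eigenvalue A^T r1 by rewrite eigenvalue_trmx.
have /eigenvalueP[p2 p2A p2_neq0] : eigenvalue A^T r2 by rewrite eigenvalue_trmx.
have /eigenvalueP[q1 q1B q1_neq0] : eigenvalue B^T s1 by rewrite eigenvalue_trmx.
have /eigenvalueP[q2 q2B q2_neq0] : eigenvalue B^T s2 by rewrite eigenvalue_trmx.
have [t tAB t_neq0] : exists2 t : 'rV_2, t *m A^T = t *m B^T & t != 0.
  apply: eigenvalue1_invmx_mulmx; first by rewrite unitmx_tr.
  by rewrite -trmx_inv -trmx_mul eigenvalue_trmx.
have [E_distinct [x1 [y1 [x2 [y2 [q1E q2E [x1_neq0 y1_neq0 x2_neq0] cross]]]]]] :=
  two_eigenbases_config p1A p2A p1_neq0 p2_neq0 r12 q1B q2B q1_neq0 q2_neq0 s12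
    rs11 rs12 rs21 rs22 tAB t_neq0.
split; first exact: E_distinct.
have /complex_realP[k kE] := cross_ratio_real r1_unit r2_unit s2_unit s1_unit.
apply: (on_circle_of_real_cross_ratio (eigenbasis_unitmx p1A p2A p1_neq0 p2_neq0 r12)
  x1_neq0 y1_neq0 x2_neq0 (etrans cross kE)); apply/eigenspaceP => //.
  by rewrite -q1E.
by rewrite -q2E.
Qed.
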